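(* Let $n,k$ be positive integers such that $s^{n,k}=\frac{n(n+1)}{2k}$ is an integer, and let $\mathcal P=[p_1,\dots,p_k]$ be an ascending partition of $n$ of size $k$ of the form $\mathcal P=[2^e,p^f,\ldots]$ with $e,f>0$ and $p\ge 3$; that is, $p_1=\cdots=p_e=2$, $p_{e+1}=\cdots=p_{e+f}=p$, and $p_i>p$ for all $i>e+f$. Let $c=s^{n,k}-n$, $C=\{x\in[n]: x\ge c\}$ and $h=|C|-2e=2n-s^{n,k}+1-2e$. Suppose that $f>h$ and \[ \sum_{i=c-p(f-h)}^{c-1} i < (f-h)\,s^{n,k}. \] Then $\mathcal P$ is non-equitable.
   Context: $[n]=\{1,2,\ldots,n\}$. An ascending partition of $n$ of size $k$ is a sequence of positive integers $[p_1,\ldots,p_k]$ with $p_1\le\cdots\le p_k$ and $\sum_i p_i=n$. Such a partition is equitable if $[n]$ can be partitioned into sets $A_1,\dots,A_k$ with $|A_i|=p_i$ such that all the sums $\sum_{x\in A_i}x$ are equal (necessarily to $s^{n,k}$). The notation $[q_1^{e_1},q_2^{e_2},\ldots]$ with $q_1<q_2<\cdots$ means the ascending partition having exactly $e_i$ parts equal to $q_i$. *)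

From mathcomp Require Import all_boot all_order all_algebra.
Set Implicit Arguments. Unset Strict Implicit. Unset Printing Implicit Defensive.
Import GRing.Theory Num.Theory.

(* [n] = {1,...,n} is represented by 'I_n, the element x : 'I_n standing for x+1. *)

Definition ascending_partition (n k : nat) (P : seq nat) : Prop :=
  [/\ size P = k, all (fun q => 0 < q) P, sorted leq P & sumn P = n].

Definition snk (n k : nat) : nat := ((n * n.+1) %/ 2) %/ k.

Definition equitable (n : nat) (P : seq nat) : Prop :=
  exists A : 'I_(size P) -> {set 'I_n},
    [/\ forall i j, i != j -> [disjoint A i & A j],
        \bigcup_(i < size P) A i = setT,
        forall i : 'I_(size P), #|A i| = nth 0 P i &
        forall i j : 'I_(size P),
          \sum_(x in A i) (x : nat).+1 = \sum_(x in A j) (x : nat).+1].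

From mathcomp Require Import all_boot all_order all_algebra zify.
Import Order.TTheory GRing.Theory Num.Theory.
Set Implicit Arguments. Unset Strict Implicit. Unset Printing Implicit Defensive.

(* A block of size 2 with sum s consists of two elements of [n], so both are at
   least c = s - n: the 2e elements of the pair blocks lie in C.  Every p-block
   meeting C uses up a further element of C, hence at least f - h of the
   p-blocks lie entirely below c.  Their union consists of p(f - h) distinct
   integers below c, so its sum is at most (c - p(f - h)) + ... + (c - 1),
   which is < (f - h)s by hypothesis; yet it is exactly (f - h)s. *)

Lemma sum_ord_succ n : \sum_(x < n) x.+1 = n * n.+1 %/ 2.
Proof.
have := bin2_sum n.+1; rewrite big_nat_recl // big_mkord add0n => ->.
by rewrite bin2 -divn2 mulnC.
Qed.

Lemma exists_subset_card (T : finType) (A : {set T}) m :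
  m <= #|A| -> exists2 B : {set T}, B \subset A & #|B| = m.
Proof.
move=> leqmA; exists [set x in take m (enum A)].
  by apply/subsetP => x; rewrite inE => /mem_take; rewrite mem_enum.
by rewrite cardsE (card_uniqP _) ?take_uniq ?enum_uniq // size_takel -?cardE.
Qed.

Lemma sum_bigcup_disjoint (I T : finType) (A : I -> {set T}) (B : {pred I})
    (E : T -> nat) :
  (forall i j, i != j -> [disjoint A i & A j]) ->
  \sum_(x in \bigcup_(i in B) A i) E x = \sum_(i in B) \sum_(x in A i) E x.
Proof.
move=> disjA; pose F i := if i \in B then A i else set0.
have -> : \bigcup_(i in B) A i = \bigcup_i F i.
  by rewrite [LHS]big_mkcond; apply: eq_bigr => i _; rewrite /F; case: ifP.
rewrite partition_disjoint_bigcup => [|i j neq_ij]; last first.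
  by rewrite /F; do 2 case: ifP => _; rewrite ?disjA // -setI_eq0 ?setI0 ?set0I.
by rewrite [RHS]big_mkcond; apply: eq_bigr => i _; rewrite /F; case: ifP; rewrite ?big_set0.
Qed.

Lemma card_set_nth_eq (T : eqType) (x0 : T) (s : seq T) q :
  #|[set i : 'I_(size s) | nth x0 s i == q]| = count_mem q s.
Proof.
rewrite -sum1_card -sum1_count (big_nth x0) big_mkord.
by apply: eq_bigl => i; rewrite inE.
Qed.

Lemma count_mem_nseq2_nseq (e f p q : nat) (rest : seq nat) :
  q <= p -> all (fun x => p < x) rest ->
  count_mem q (nseq e 2 ++ nseq f p ++ rest) = (2 == q) * e + (p == q) * f.
Proof.
move=> le_qp gt_rest; rewrite !count_cat !count_nseq.
suff -> : count_mem q rest = 0 by rewrite addn0.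
apply/eqP; rewrite -leqn0 leqNgt -has_count; apply/hasPn => x /(allP gt_rest) /= lt_px.
by apply: contraTneq lt_px => ->; rewrite -leqNgt.
Qed.

Section DistinctSum.

Local Open Scope ring_scope.

Lemma sum_distinct_below (T : finType) (w : T -> nat) (U : {set T}) (c : int) :
  {in U &, injective w} -> (forall x, x \in U -> (w x)%:Z < c) ->
  \sum_(x in U) (w x)%:Z <= \sum_(j < #|U|) (c - #|U|%:Z + j%:Z).
Proof.
move cardU: #|U| => N; elim: N U c cardU => [|N IHN] U c cardU injw ltwc.
  by move/eqP: cardU; rewrite cards_eq0 => /eqP ->; rewrite big_set0 big_ord0.
have [x0 Ux0] : exists x, x \in U by apply/set0Pn; rewrite -card_gt0 cardU.
have [M UM maxM] := arg_maxnP w Ux0; have {}UM : M \in U := UM.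
have cardUM : #|U :\ M| = N by move: (cardsD1 M U); rewrite cardU UM => -[].
have ltwM y : y \in U :\ M -> (w y)%:Z < (w M)%:Z.
  rewrite !inE ltz_nat ltn_neqAle => /andP [neq_yM Uy].
  rewrite (maxM y Uy : w y <= w M)%N andbT.
  by apply: contra neq_yM => /eqP /(injw _ _ Uy UM) ->.
have IH : \sum_(x in U :\ M) (w x)%:Z <= \sum_(j < N) (c - N.+1%:Z + j%:Z).
  apply: le_trans (IHN _ _ cardUM _ ltwM) _ => [x y /setD1P [_ Ux] /setD1P [_ Uy]|].
    exact: injw.
  by apply: ler_sum => j _; have := ltwc M UM; lia.
rewrite (big_setD1 M) //= big_ord_recr /= addrC lerD //.
by have := ltwc M UM; lia.
Qed.

End DistinctSum.

Section EqualSumBlocks.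

Variables (n K S : nat) (A : 'I_K -> {set 'I_n}).
Hypothesis disjA : forall i j, i != j -> [disjoint A i & A j].
Hypothesis coverA : \bigcup_i A i = setT.
Hypothesis sumA : forall i, \sum_(x in A i) x.+1 = S.

Definition blocks q := [set i | #|A i| == q].

Lemma block_sum_snk : 0 < K -> S = snk n K.
Proof.
move=> K_gt0; rewrite /snk -sum_ord_succ.
rewrite (eq_bigl (fun x => x \in \bigcup_i A i)) => [|x]; last by rewrite coverA in_setT.
by rewrite partition_disjoint_bigcup // (eq_bigr (fun=> S)) // sum_nat_const card_ord mulKn.
Qed.

Lemma sum_bigcup_blocks (G : {set 'I_K}) :
  \sum_(x in \bigcup_(i in G) A i) x.+1 = #|G| * S.
Proof.
rewrite sum_bigcup_disjoint // (eq_bigr (fun=> S)) //.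
by rewrite sum_nat_const.
Qed.

Lemma card_bigcup_blocks q (G : {set 'I_K}) :
  G \subset blocks q -> #|\bigcup_(i in G) A i| = #|G| * q.
Proof.
move=> /subsetP sub_G; rewrite -sum1_card sum_bigcup_disjoint //.
rewrite (eq_bigr (fun=> q)) ?sum_nat_const // => i /sub_G.
by rewrite inE sum1_card => /eqP.
Qed.

Lemma pair_block_ge i x : i \in blocks 2 -> x \in A i -> S <= x.+1 + n.
Proof.
rewrite inE => /eqP card2 Ax; rewrite -(sumA i) (big_setD1 x) //= leq_add2l.
have [y Ey] : exists y, A i :\ x = [set y].
  by apply/cards1P; move: (cardsD1 x (A i)); rewrite card2 Ax add1n => -[<-].
by rewrite Ey big_set1.
Qed.

Lemma card_blocks_avoiding_ge (C : {set 'I_n}) q : q != 2 ->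
    (forall i, i \in blocks 2 -> A i \subset C) ->
  #|blocks q| + 2 * #|blocks 2| <= #|C| + #|[set i in blocks q | [disjoint A i & C]]|.
Proof.
move=> neq_q2 sub_C; set Good := [set i in _ | _]; set Bad := blocks q :\: Good.
have cardBad : #|blocks q| = #|Bad| + #|Good|.
  have sub_Good : Good \subset blocks q by apply/subsetP => i; rewrite inE => /andP [].
  by rewrite addnC -(cardsID Good (blocks q)) (setIidPr sub_Good).
have disj_AC i j : i != j -> [disjoint A i :&: C & A j :&: C].
  by move=> /disjA; apply: disjointW; apply: subsetIl.
have disj_Bad2 : [disjoint Bad & blocks 2].
  apply/pred0P => i /=; rewrite !inE.
  by case: (#|A i| =P 2) => [-> | _]; rewrite ?andbF // eq_sym (negPf neq_q2) andbF.
pose Used := \bigcup_(i in [predU Bad & blocks 2]) (A i :&: C).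
have : #|Used| <= #|C| by apply/subset_leq_card/bigcupsP => i _; apply: subsetIr.
rewrite -sum1_card sum_bigcup_disjoint // bigU //= cardBad.
have -> : \sum_(i in blocks 2) \sum_(x in A i :&: C) 1 = #|blocks 2| * 2.
  rewrite (eq_bigr (fun=> 2)) ?sum_nat_const // => i i2.
  by rewrite sum1_card (setIidPl (sub_C i i2)); move: i2; rewrite inE => /eqP.
have : #|Bad| <= \sum_(i in Bad) \sum_(x in A i :&: C) 1.
  rewrite -sum1_card leq_sum // => i; rewrite !inE sum1_card card_gt0 setI_eq0.
  by case: (_ == q); rewrite ?andbT ?andbF.
move=> le_Bad le_C; rewrite addnAC leq_add2r mulnC.
by apply: leq_trans le_C; rewrite leq_add2r.
Qed.

Lemma exists_blocks_avoiding (C : {set 'I_n}) q m : q != 2 ->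
    (forall i, i \in blocks 2 -> A i \subset C) ->
    m + #|C| <= #|blocks q| + 2 * #|blocks 2| ->
  exists G : {set 'I_K},
    [/\ G \subset blocks q, #|G| = m & {in G, forall i, [disjoint A i & C]}].
Proof.
move=> neq_q2 sub_C le_m; have := card_blocks_avoiding_ge neq_q2 sub_C.
set Good := [set i in _ | _] => le_Good.
have [|G sub_G cardG] := @exists_subset_card _ Good m; first lia.
exists G; split=> // [|i /(subsetP sub_G)]; last by rewrite inE => /andP [].
by apply: subset_trans sub_G _; apply/subsetP => i; rewrite inE => /andP [].
Qed.

Lemma sum_blocks_below q (G : {set 'I_K}) (c : int) : G \subset blocks q ->
    (forall i x, i \in G -> x \in A i -> (x.+1%:Z < c)%R) ->
  ((#|G| * S)%N%:Z <= \sum_(j < #|G| * q) (c - (#|G| * q)%N%:Z + j%:Z))%R.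
Proof.
move=> sub_G lt_c; rewrite -(sum_bigcup_blocks G) -(card_bigcup_blocks sub_G).
rewrite (big_morph Posz PoszD (erefl (Posz 0))); apply: sum_distinct_below.
  by move=> x y _ _ /succn_inj /ord_inj.
by move=> x /bigcupP [i Gi Aix]; apply: lt_c Aix.
Qed.

End EqualSumBlocks.

Lemma card_blocks_nth n (P : seq nat) (A : 'I_(size P) -> {set 'I_n}) q :
  (forall i, #|A i| = nth 0 P i) -> #|blocks A q| = count_mem q P.
Proof.
move=> cardA; rewrite -(card_set_nth_eq 0).
by apply: eq_card => i; rewrite !inE cardA.
Qed.

Local Open Scope ring_scope.

Theorem mainTheorem1 (n k : nat) (P : seq nat) (e f p : nat) (rest : seq nat) :
  (0 < n)%N -> (0 < k)%N ->
  (k %| (n * n.+1) %/ 2)%N -> (2 %| n * n.+1)%N ->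
  ascending_partition n k P ->
  P = nseq e 2%N ++ nseq f p ++ rest ->
  (0 < e)%N -> (0 < f)%N -> (3 <= p)%N ->
  all (fun q => p < q)%N rest ->
  let s : int := (snk n k)%:Z in
  let c : int := s - n%:Z in
  let C : {set 'I_n} := [set x : 'I_n | c <= ((x : nat).+1)%:Z] in
  let h : int := #|C|%:Z - (2 * e)%:Z in
  h < f%:Z ->
  \sum_(j < (p * `|f%:Z - h|)%N) (c - p%:Z * (f%:Z - h) + j%:Z)
    < (f%:Z - h) * s ->
  ~ equitable n P.
Proof.
move=> _ k_gt0 _ _ [sizeP _ _ _] defP _ _ p_ge3 gt_rest s c C h lt_hf ineq.
move=> [A [disjA coverA cardA sumA]]; subst k.
set S := (\sum_(x in A (Ordinal k_gt0)) x.+1)%N.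
have {}sumA i : (\sum_(x in A i) x.+1)%N = S by apply: sumA.
have sE : s = S%:Z by rewrite /s -(block_sum_snk disjA coverA sumA).
have card2 : #|blocks A 2%N| = e.
  rewrite (card_blocks_nth _ cardA) defP count_mem_nseq2_nseq ?eqxx //; last lia.
  by case: (p =P 2%N); lia.
have cardp : #|blocks A p| = f.
  rewrite (card_blocks_nth _ cardA) defP count_mem_nseq2_nseq ?eqxx //.
  by case: (2 =P p); lia.
have sub_C i : i \in blocks A 2%N -> A i \subset C.
  move=> i2; apply/subsetP => x Ax; rewrite inE /c sE.
  by have := pair_block_ge sumA i2 Ax; lia.
set m := `|f%:Z - h|%N; have mE : m%:Z = f%:Z - h by rewrite /m gez0_abs; lia.
have le_m : (m + #|C| <= #|blocks A p| + 2 * #|blocks A 2%N|)%N.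
  by rewrite cardp card2 -lez_nat PoszD mE /h; lia.
have [G [sub_G cardG avoid_G]] :=
  exists_blocks_avoiding disjA (ltac:(lia) : p != 2%N) sub_C le_m.
have lt_c i x : i \in G -> x \in A i -> x.+1%:Z < c.
  by move=> /avoid_G /disjointFr AC /AC; rewrite inE ltNge => /negbT.
have := sum_blocks_below disjA sumA sub_G lt_c.
move: ineq; rewrite -mE sE absz_nat -!PoszM cardG [(p * m)%N]mulnC => lt_sum le_sum.
by have := le_lt_trans le_sum lt_sum; rewrite ltxx.
Qed.
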